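(* Let $b>1$, let $(p,R,I)$ be proper with $I$ non-empty, and let $k$ be the greatest divisor of $p$ coprime with $b$. If two states $(s,t)$ and $(s',t')$ of $\mathcal{C}_{R,p,I}$ are Nerode-equivalent, then $s\equiv s'\pmod k$.
   Context: $A_b=\{0,\ldots,b-1\}$; for $u=u_\ell\cdots u_0$, $\mathrm{val}(u)=\sum_i u_ib^i$. Given $p\ge1$, $R\subseteq\{0,\ldots,p-1\}$ and a finite set $I\subseteq\mathbb{N}$, the set $S=(R+p\mathbb{N})\oplus I$ ($\oplus$ = symmetric difference). The triple $(p,R,I)$ is proper if $p$ is the smallest positive integer for which there exist $R',I'$ with $R'\subseteq\{0,\ldots,p-1\}$, $I'$ finite and $S=(R'+p\mathbb{N})\oplus I'$. $\mathcal{A}_{R,p}$: states $\{0,\ldots,p-1\}$, initial $0$, final $R$, transitions $n\xrightarrow{a}(nb+a)\bmod p$. With $m=\max I$, $\mathcal{B}_I$: states $\{0,\ldots,m\}\cup\{\bot\}$, initial $0$, final $I$, transitions $i\xrightarrow{a}ib+a$ if $ib+a\le m$, $i\xrightarrow{a}\bot$ otherwise, and $\bot\xrightarrow{a}\bot$. $\mathcal{C}_{R,p,I}$ is the accessible part of the product automaton of $\mathcal{A}_{R,p}$ and $\mathcal{B}_I$: states are pairs $(s,t)$ reachable from $(0,0)$, $(s,t)\xrightarrow{a}(s',t')$ iff $s\xrightarrow{a}s'$ and $t\xrightarrow{a}t'$, and $(s,t)$ is final iff exactly one of $s\in R$, $t\in I$ holds. Two states are Nerode-equivalent if for every word $u$,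 the states reached by reading $u$ from them are both final or both non-final. *)

From mathcomp Require Import all_boot.
Set Implicit Arguments. Unset Strict Implicit. Unset Printing Implicit Defensive.

(* Words over A_b are lists of digits, most significant digit first:
   u = u_l ... u_0 is the list [:: u_l; ...; u_0]. *)
Definition is_word (b : nat) (u : seq nat) : bool := all (fun a => a < b) u.

Definition val_word (b : nat) (u : seq nat) : nat := foldl (fun n a => n * b + a) 0 u.

(* Membership in S = (R + pN) (+) I, for R a subset of {0,..,p-1}
   (given as a list) and I a finite set of naturals (given as a list). *)
Definition inS (p : nat) (R I : seq nat) (n : nat) : bool :=
  ((n %% p) \in R) (+) (n \in I).

Definition proper_triple (p : nat) (R I : seq nat) : Prop :=
  [/\ 0 < p, all (fun r => r < p) R &
    forall (p' : nat) (R' I' : seq nat), 0 < p' -> all (fun r => r < p') R' ->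
      (forall n, inS p' R' I' n = inS p R I n) -> p <= p'].

Definition stepA (b p : nat) (s a : nat) : nat := (s * b + a) %% p.

(* Automaton B_I: states Some i (0 <= i <= m) and None (= bottom). *)
Definition maxI (I : seq nat) : nat := \max_(i <- I) i.

Definition stepB (b : nat) (I : seq nat) (t : option nat) (a : nat) : option nat :=
  match t with
  | Some i => if i * b + a <= maxI I then Some (i * b + a) else None
  | None => None
  end.

Definition stepC (b p : nat) (I : seq nat) (st : nat * option nat) (a : nat)
  : nat * option nat := (stepA b p st.1 a, stepB b I st.2 a).

Definition runC (b p : nat) (I : seq nat) (st : nat * option nat) (u : seq nat)
  : nat * option nat := foldl (stepC b p I) st u.

Definition finalC (R I : seq nat) (st : nat * option nat) : bool :=
  (st.1 \in R) (+) (if st.2 is Some i then i \in I else false).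

Definition initC : nat * option nat := (0, Some 0).

Definition stateC (b p : nat) (I : seq nat) (st : nat * option nat) : Prop :=
  exists u, is_word b u /\ runC b p I initC u = st.

Definition nerode_equiv (b p : nat) (R I : seq nat) (st st' : nat * option nat) : Prop :=
  forall u, is_word b u -> finalC R I (runC b p I st u) = finalC R I (runC b p I st' u).

Definition gcop (p b : nat) : nat := \max_(d < p.+1 | (d %| p) && coprime d b) d.

(* Reading a word u of length L sends the A-component s to s * b^L + val u
   (mod p), and once L exceeds max I the B-component is dead.  Taking L
   large, Nerode equivalence of (s,t) and (s',t') thus says that the residue
   predicate y |-> (y mod p \in R) takes the same values at s b^L + x and at
   s' b^L + x for every x.  This makes s' b^L - s b^L a period of that
   predicate, hence so is its gcd with p; properness forces this gcd to be p,
   so s b^L = s' b^L (mod p), and a fortiori modulo k.  Since k is coprime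
   with b, the factor b^L cancels. *)
From mathcomp Require Import all_boot.
From mathcomp Require Import zify.

Set Implicit Arguments.
Unset Strict Implicit.
Unset Printing Implicit Defensive.

Lemma eqn_modMr_coprime d m n c :
  coprime d c -> (m * c == n * c %[mod d]) = (m == n %[mod d]).
Proof.
move=> dc; wlog le_nm : m n / n <= m.
  by move=> wlog_mn; case: (leqP n m) => [|/ltnW] /wlog_mn // ; rewrite eq_sym => ->.
by rewrite !eqn_mod_dvd ?leq_mul2r ?le_nm ?orbT // -mulnBl Gauss_dvdl.
Qed.

Lemma mod_window p N x :
  0 < p -> p <= N -> exists2 v, N - p <= v < N & v = x %[mod p].
Proof.
move=> p_gt0 le_pN; exists (N - p + (x + (N - p) * p.-1) %% p).
  have := ltn_pmod (x + (N - p) * p.-1) p_gt0.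
  by move: (_ %% p) => r; lia.
by rewrite modnDmr (_ : _ + _ = (N - p) * p + x) ?modnMDl //; nia.
Qed.

Lemma gcop_dvdn_coprime p b : 0 < p -> gcop p b %| p /\ coprime (gcop p b) b.
Proof.
move=> p_gt0; rewrite /gcop.
have [|d /andP[dvd_dp cop_db] ->] :=
  @eq_bigmax_cond _ [pred d : 'I_p.+1 | (d %| p) && coprime d b] (fun d => nat_of_ord d).
  by apply/card_gt0P; exists (Ordinal (p_gt0 : 1 < p.+1)); rewrite inE /= dvd1n coprime1n.
by split.
Qed.

Section Periods.

Definition is_period (T : Type) (f : nat -> T) (d : nat) := forall y, f (y + d) = f y.

Lemma period_mull (T : Type) (f : nat -> T) d q : is_period f d -> is_period f (q * d).
Proof.
move=> per_d; elim: q => [|q IHq] y; first by rewrite addn0.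
by rewrite mulSn addnA IHq per_d.
Qed.

Definition residue_in (p : nat) (R : seq nat) (n : nat) : bool := (n %% p) \in R.

Variables (p : nat) (R : seq nat).

Lemma residue_in_congr m n : m = n %[mod p] -> residue_in p R m = residue_in p R n.
Proof. by rewrite /residue_in => ->. Qed.

Lemma residue_in_period_gcdn e :
  0 < p -> is_period (residue_in p R) e -> is_period (residue_in p R) (gcdn p e).
Proof.
move=> p_gt0 per_e y; have [a _ dvd_p] := Bezoutl e p_gt0.
rewrite -(period_mull a per_e) -addnA; apply: residue_in_congr.
by rewrite -modnDmr (eqP dvd_p) addn0.
Qed.

Lemma proper_period_ge I g :
  proper_triple p R I -> 0 < g -> is_period (residue_in p R) g -> p <= g.
Proof.
case=> _ _ minimal g_gt0 per_g.
apply: (minimal g [seq r <- iota 0 g | residue_in p R r] I g_gt0).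
  by apply/allP => r; rewrite mem_filter mem_iota => /andP[_ /andP[]].
move=> n; rewrite /inS mem_filter mem_iota add0n leq0n ltn_pmod // !andbT; congr (_ (+) _).
by rewrite -[RHS]/(residue_in p R n) [in RHS](divn_eq n g) addnC period_mull.
Qed.

Lemma proper_shift_congr I c c' :
  proper_triple p R I ->
  (forall x, residue_in p R (c + x) = residue_in p R (c' + x)) ->
  c = c' %[mod p].
Proof.
move=> proper shift; have [p_gt0 _ _] := proper.
(* c' + c (p - 1) is congruent to c' - c, the candidate period *)
set e := c' + c * p.-1.
have per_e : is_period (residue_in p R) e.
  move=> y; rewrite addnCA -shift; apply: residue_in_congr.
  by rewrite (_ : _ + _ = c * p + y) ?modnMDl //; nia.
have /gcdn_idPl dvd_pe : gcdn p e = p.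
  apply/eqP; rewrite eqn_leq dvdn_leq ?dvdn_gcdl //.
  by apply: proper_period_ge proper _ (residue_in_period_gcdn _ per_e); rewrite ?gcdn_gt0 p_gt0.
rewrite -[c in LHS]add0n -(eqP dvd_pe) modnDml (_ : e + c = c * p + c') ?modnMDl //.
by rewrite /e; nia.
Qed.

End Periods.

Section Automaton.

Variables (b p : nat) (R I : seq nat).

Fixpoint digits (L v : nat) : seq nat :=
  if L is L'.+1 then rcons (digits L' (v %/ b)) (v %% b) else [::].

Lemma val_word_rcons w a : val_word b (rcons w a) = val_word b w * b + a.
Proof. by rewrite /val_word foldl_rcons. Qed.

Lemma size_digits L v : size (digits L v) = L.
Proof. by elim: L v => //= L IHL v; rewrite size_rcons IHL. Qed.

Lemma is_word_digits L v : 0 < b -> is_word b (digits L v).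
Proof.
by move=> b_gt0; elim: L v => //= L IHL v; rewrite /is_word all_rcons ltn_pmod //; apply: IHL.
Qed.

Lemma val_digits L v : 0 < b -> v < b ^ L -> val_word b (digits L v) = v.
Proof.
move=> b_gt0; elim: L v => [|L IHL] v /=; first by rewrite ltnS leqn0 => /eqP.
by move=> lt_v; rewrite val_word_rcons IHL -?divn_eq // ltn_divLR // -expnSr.
Qed.

Lemma runC_pair st w :
  runC b p I st w = (foldl (stepA b p) st.1 w, foldl (stepB b I) st.2 w).
Proof. by rewrite /runC; elim: w st => [|a w IHw] [x y] //=. Qed.

Lemma foldl_stepA_mod s w :
  foldl (stepA b p) s w = s * b ^ size w + val_word b w %[mod p].
Proof.
elim/last_ind: w => [|w a IHw]; first by rewrite muln1 addn0.
rewrite foldl_rcons size_rcons val_word_rcons /stepA modn_mod -modnDml -modnMml.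
by rewrite IHw modnMml modnDml expnSr; congr (_ %% p); lia.
Qed.

Lemma foldl_stepA s w :
  0 < size w -> foldl (stepA b p) s w = (s * b ^ size w + val_word b w) %% p.
Proof.
by case/lastP: w => // w a _; rewrite -foldl_stepA_mod foldl_rcons /stepA modn_mod.
Qed.

Lemma foldl_stepB_Some t w j : foldl (stepB b I) t w = Some j -> val_word b w <= j.
Proof.
elim/last_ind: w j => // w a IHw j; rewrite foldl_rcons.
case Ew: (foldl _ t w) => [i|] //=; case: ifP => // _ [<-].
by rewrite val_word_rcons leq_add2r leq_mul2r (IHw _ Ew) orbT.
Qed.

Lemma foldl_stepB_None t w : maxI I < val_word b w -> foldl (stepB b I) t w = None.
Proof.
case/lastP: w => // w a; rewrite foldl_rcons val_word_rcons.
case Ew: (foldl _ t w) => [i|] //= lt_max; rewrite leqNgt (leq_trans lt_max) //.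
by rewrite leq_add2r leq_mul2r (foldl_stepB_Some Ew) orbT.
Qed.

Lemma finalC_long_word s t w :
  0 < size w -> maxI I < val_word b w ->
  finalC R I (runC b p I (s, t) w) = residue_in p R (s * b ^ size w + val_word b w).
Proof.
by move=> w_ne lt_max; rewrite runC_pair /finalC /= foldl_stepB_None // addbF foldl_stepA.
Qed.

Lemma nerode_equiv_residue_shift s t s' t' :
  1 < b -> 0 < p -> nerode_equiv b p R I (s, t) (s', t') ->
  let L := maxI I + p in
  forall x, residue_in p R (s * b ^ L + x) = residue_in p R (s' * b ^ L + x).
Proof.
move=> b_gt1 p_gt0 nerode L x; have b_gt0 := ltnW b_gt1.
have lt_L : L < b ^ L := ltn_expl L b_gt1.
have [|v /andP[ge_v lt_v] v_x] := mod_window x p_gt0 (_ : p <= b ^ L); first by lia.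
have congr_v c : residue_in p R (c + x) = residue_in p R (c + v).
  by apply: residue_in_congr; rewrite -modnDmr -v_x modnDmr.
have [size_w val_w] : size (digits L v) = L /\ val_word b (digits L v) = v.
  by rewrite size_digits val_digits.
have := nerode _ (is_word_digits L v b_gt0).
by rewrite !finalC_long_word ?size_w ?val_w ?congr_v //; lia.
Qed.

End Automaton.

Theorem proposition40 (b p : nat) (R I : seq nat) (s s' : nat) (t t' : option nat) :
  1 < b -> proper_triple p R I -> I != [::] ->
  stateC b p I (s, t) -> stateC b p I (s', t') ->
  nerode_equiv b p R I (s, t) (s', t') ->
  s = s' %[mod gcop p b].
Proof.
move=> b_gt1 proper _ _ _ nerode; have [p_gt0 _ _] := proper.
have [dvd_kp cop_kb] := gcop_dvdn_coprime b p_gt0.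
have congr_p := proper_shift_congr proper (nerode_equiv_residue_shift b_gt1 p_gt0 nerode).
apply/eqP; rewrite -(eqn_modMr_coprime _ _ (coprimeXr (maxI I + p) cop_kb)).
by rewrite -(modn_dvdm (s * _) dvd_kp) congr_p modn_dvdm.
Qed.
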